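(* Let $\mathcal{A}=\mathcal{R}*_K\mathcal{S}*_L\mathcal{T}\in\mathbb{C}^{I_1\times\cdots\times I_N\times J_1\times\cdots\times J_M}$, where $\mathcal{R}\in\mathbb{C}^{I_1\times\cdots\times I_N\times H_1\times\cdots\times H_K}$, $\mathcal{S}\in\mathbb{C}^{H_1\times\cdots\times H_K\times G_1\times\cdots\times G_L}$ and $\mathcal{T}\in\mathbb{C}^{G_1\times\cdots\times G_L\times J_1\times\cdots\times J_M}$, and let $\mathcal{B}=\mathcal{T}^{\dagger}*_L(\mathcal{A}*_M\mathcal{T}^{\dagger})^{\dagger}$ and $\mathcal{C}=(\mathcal{R}^{\dagger}*_N\mathcal{A})^{\dagger}*_K\mathcal{R}^{\dagger}$. Then $\mathcal{B}=\mathcal{A}^{\dagger}$ if and only if $\mathcal{C}=\mathcal{A}_{\pi\dagger}$; and $\mathcal{B}=\mathcal{A}_{\pi\dagger}$ if and only if $\mathcal{C}=\mathcal{A}^{\dagger}$.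
   Context: $\mathbb{C}^{I_1\times\cdots\times I_N}$ denotes the set of complex tensors of order $N$ and dimension $I_1\times\cdots\times I_N$. For $\mathcal{A}\in\mathbb{C}^{I_1\times\cdots\times I_N\times K_1\times\cdots\times K_N}$ and $\mathcal{B}\in\mathbb{C}^{K_1\times\cdots\times K_N\times J_1\times\cdots\times J_M}$, the Einstein product $\mathcal{A}*_N\mathcal{B}$ is defined by $(\mathcal{A}*_N\mathcal{B})_{i_1\dots i_N j_1\dots j_M}=\sum_{k_1,\dots,k_N}a_{i_1\dots i_N k_1\dots k_N}b_{k_1\dots k_N j_1\dots j_M}$; it is associative. $\mathcal{A}^H$ denotes the conjugate transpose. For $\mathcal{A}\in\mathbb{C}^{I_1\times\cdots\times I_N\times J_1\times\cdots\times J_M}$ the Moore–Penrose inverse $\mathcal{A}^{\dagger}$ is the unique $\mathcal{X}\in\mathbb{C}^{J_1\times\cdots\times J_M\times I_1\times\cdots\times I_N}$ with $\mathcal{A}*_M\mathcal{X}*_N\mathcal{A}=\mathcal{A}$, $\mathcal{X}*_N\mathcal{A}*_M\mathcal{X}=\mathcal{X}$, $(\mathcal{A}*_M\mathcal{X})^H=\mathcal{A}*_M\mathcal{X}$, $(\mathcal{X}*_N\mathcal{A})^H=\mathcal{X}*_N\mathcal{A}$. Given the factorization $\mathcal{A}=\mathcal{R}*_K\mathcal{S}*_L\mathcal{T}$, the product Moore–Penrose inverse of $\mathcal{A}$ is $\mathcal{A}_{\pi\dagger}=\mathcal{T}^{\dagger}*_L(\mathcal{R}^{\dagger}*_N\mathcal{A}*_M\mathcal{T}^{\dagger})^{\dagger}*_K\mathcal{R}^{\dagger}$.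 *)

From HB Require Import structures.
From mathcomp Require Import all_boot all_order all_algebra.
From mathcomp Require Import reals complex.
From Stdlib Require Import ClassicalEpsilon.
Set Implicit Arguments. Unset Strict Implicit. Unset Printing Implicit Defensive.
Import Order.TTheory GRing.Theory Num.Theory.
Local Open Scope ring_scope.

Definition idx (d : seq nat) := {dffun forall k : 'I_(size d), 'I_(nth 0%N d k)}.

Section Tensors.
Variable R : realType.
Local Notation C := (R[i]).

(* tensor dI dJ = C^{I_1 x ... x I_N x J_1 x ... x J_M}, entries indexed by
   the pair of multi-indices (i_1..i_N, j_1..j_M). *)
Definition tensor (dI dJ : seq nat) := {ffun idx dI * idx dJ -> C}.

Definition einstein dI dK dJ (A : tensor dI dK) (B : tensor dK dJ) : tensor dI dJ :=
  [ffun ij => \sum_(k : idx dK) A (ij.1, k) * B (k, ij.2)].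

Definition ctrans dI dJ (A : tensor dI dJ) : tensor dJ dI :=
  [ffun ji => (A (ji.2, ji.1))^*].

Definition is_MP dI dJ (A : tensor dI dJ) (X : tensor dJ dI) : bool :=
  [&& einstein (einstein A X) A == A,
      einstein (einstein X A) X == X,
      ctrans (einstein A X) == einstein A X &
      ctrans (einstein X A) == einstein X A].

(* Moore--Penrose inverse: the (unique) X satisfying the Penrose equations
   (default 0 if none existed; it always exists over C). *)
Definition MP dI dJ (A : tensor dI dJ) : tensor dJ dI :=
  match excluded_middle_informative (exists X, is_MP A X) with
  | left h => xchoose h
  | right _ => 0
  end.

Definition prodMP dI dH dG dJ (Rt : tensor dI dH) (T : tensor dG dJ)
  (A : tensor dI dJ) : tensor dJ dI :=
  einstein (einstein (MP T) (MP (einstein (einstein (MP Rt) A) (MP T)))) (MP Rt).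

End Tensors.

From HB Require Import structures.
From mathcomp Require Import all_boot all_order all_algebra.
From mathcomp Require Import reals complex sesquilinear spectral.
From Stdlib Require Import ClassicalEpsilon.
Set Implicit Arguments. Unset Strict Implicit. Unset Printing Implicit Defensive.
Import Order.TTheory GRing.Theory Num.Theory.
Local Open Scope ring_scope.

(* Flattening multi-indices turns tensors into matrices, the Einstein product
   into the matrix product and the conjugate transpose into the matrix one.
   Moore-Penrose inverses therefore exist (for a full-rank factorization F G
   take G^H (G G^H)^-1 (F^H F)^-1 F^H) and are unique by the Penrose equations.

   If A = E T and E T T^+ = E, the reverse-order law T^+ E^+ = A^+ holds iff
   T^+ E^+ E T is Hermitian.  Put E = A T^+ and F = R^+ A T^+.  Since E = R F
   and F = R^+ E, both have the same row space, so E^+ E = F^+ F; hence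
   B = A^+ iff T^+ F^+ = (R^+ A)^+.  As (R^+ X)^+ R^+ R = (R^+ X)^+ for all X,
   right multiplication by R^+ does not lose information on either side, which
   gives C = A_{pi+}.  The second equivalence is the first one for the
   factorization A^H = T^H S^H R^H, because (X^H)^+ = (X^+)^H. *)

Section MatrixPenrose.
Variable R : realType.
Local Notation C := R[i].
Local Open Scope sesquilinear_scope.

Lemma trmxC_mul m n p (A : 'M[C]_(m, n)) (B : 'M[C]_(n, p)) :
  (A *m B)^t* = B^t* *m A^t*.
Proof. by rewrite trmx_mul map_mxM. Qed.

Lemma trmxC_invmx n (M : 'M[C]_n) : (invmx M)^t* = invmx (M^t*).
Proof. by rewrite trmx_inv map_invmx. Qed.

Lemma unitmx_gram r n (G : 'M[C]_(r, n)) : row_free G -> G *m G^t* \in unitmx.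
Proof.
move=> freeG; rewrite -row_free_unit; apply/inj_row_free => v vGG0.
apply: (row_free_inj freeG); rewrite mul0mx.
have : dotmx (v *m G) (v *m G) == 0.
  by rewrite dotmxE trmxC_mul mulmxA -(mulmxA v) vGG0 mul0mx mxE.
by rewrite dnorm_eq0 => /eqP.
Qed.

Definition penrose_mx m n (A : 'M[C]_(m, n)) (X : 'M[C]_(n, m)) :=
  [/\ A *m X *m A = A, X *m A *m X = X,
      (A *m X)^t* = A *m X & (X *m A)^t* = X *m A].

Lemma penrose_mx_full_rank_factor m r n (F : 'M[C]_(m, r)) (G : 'M[C]_(r, n)) :
  row_free (F^t*) -> row_free G ->
  penrose_mx (F *m G) (G^t* *m invmx (G *m G^t*) *m invmx (F^t* *m F) *m F^t*).
Proof.
move=> freeF freeG.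
have uG := unitmx_gram freeG; have uF := unitmx_gram freeF; rewrite trmxCK in uF.
set MG := G *m G^t* in uG *; set MF := F^t* *m F in uF *.
have hermV k (K : 'M[C]_(k, r)) M :
    M^t* = M -> (K *m invmx M *m K^t*)^t* = K *m invmx M *m K^t*.
  by move=> hM; rewrite !trmxC_mul trmxC_invmx hM trmxCK mulmxA.
have AX : F *m G *m (G^t* *m invmx MG *m invmx MF *m F^t*) = F *m invmx MF *m F^t*.
  by rewrite -!mulmxA (mulmxA G) -/MG (mulmxA MG) (mulmxV uG) mul1mx.
have XA : G^t* *m invmx MG *m invmx MF *m F^t* *m (F *m G) = G^t* *m invmx MG *m G.
  by rewrite !mulmxA -(mulmxA _ (F^t*)) -/MF -(mulmxA _ _ MF) (mulVmx uF) mulmx1.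
split.
- by rewrite AX !mulmxA -(mulmxA _ (F^t*)) -/MF -(mulmxA _ _ MF) (mulVmx uF) mulmx1.
- by rewrite XA -!mulmxA (mulmxA G) -/MG (mulmxA MG) (mulmxV uG) mul1mx.
- by rewrite AX; apply: hermV; rewrite /MF trmxC_mul trmxCK.
- rewrite XA; have := hermV _ (G^t*) MG; rewrite trmxCK; apply.
  by rewrite /MG trmxC_mul trmxCK.
Qed.

Lemma penrose_mx_exists m n (A : 'M[C]_(m, n)) : exists X, penrose_mx A X.
Proof.
rewrite -[A]mulmx_base; eexists; apply: penrose_mx_full_rank_factor.
  by rewrite /row_free mxrank_map mxrank_tr; exact: col_base_full.
exact: row_base_free.
Qed.

End MatrixPenrose.

Section TensorPenrose.
Variable R : realType.
Local Notation C := R[i].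
Local Notation "A ** B" := (einstein A B) (at level 40, left associativity).

Definition tensor_mx dI dJ (A : tensor R dI dJ) : 'M[C]_(#|idx dI|, #|idx dJ|) :=
  \matrix_(i, j) A (enum_val i, enum_val j).

Definition mx_tensor dI dJ (M : 'M[C]_(#|idx dI|, #|idx dJ|)) : tensor R dI dJ :=
  [ffun ij => M (enum_rank ij.1) (enum_rank ij.2)].

Lemma mx_tensorK dI dJ : cancel (@mx_tensor dI dJ) (@tensor_mx dI dJ).
Proof. by move=> M; apply/matrixP => i j; rewrite !mxE ffunE /= !enum_valK. Qed.

Lemma tensor_mx_inj dI dJ : injective (@tensor_mx dI dJ).
Proof.
move=> A B /matrixP eqAB; apply/ffunP => -[i j].
by have := eqAB (enum_rank i) (enum_rank j); rewrite !mxE !enum_rankK.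
Qed.

Lemma tensor_mx_einstein dI dK dJ (A : tensor R dI dK) (B : tensor R dK dJ) :
  tensor_mx (A ** B) = tensor_mx A *m tensor_mx B.
Proof.
apply/matrixP => i j; rewrite !mxE ffunE /=.
rewrite (reindex (enum_val : 'I_#|idx dK| -> idx dK)) /=.
  by apply: eq_bigr => k _; rewrite !mxE.
by exists enum_rank => x _; [rewrite enum_valK | rewrite enum_rankK].
Qed.

Lemma tensor_mx_ctrans dI dJ (A : tensor R dI dJ) :
  tensor_mx (ctrans A) = ((tensor_mx A)^t*)%sesqui.
Proof. by apply/matrixP => i j; rewrite !mxE ffunE. Qed.

Lemma einsteinA dI dJ dK dL (A : tensor R dI dJ) (B : tensor R dJ dK)
    (D : tensor R dK dL) :
  A ** (B ** D) = A ** B ** D.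
Proof. by apply: tensor_mx_inj; rewrite !tensor_mx_einstein mulmxA. Qed.

Lemma ctransK dI dJ : cancel (@ctrans R dI dJ) (@ctrans R dJ dI).
Proof. by move=> A; apply: tensor_mx_inj; rewrite !tensor_mx_ctrans trmxCK. Qed.

Lemma ctrans_einstein dI dJ dK (A : tensor R dI dJ) (B : tensor R dJ dK) :
  ctrans (A ** B) = ctrans B ** ctrans A.
Proof.
apply: tensor_mx_inj.
by rewrite tensor_mx_ctrans !tensor_mx_einstein !tensor_mx_ctrans trmxC_mul.
Qed.

Lemma is_MP_MP dI dJ (A : tensor R dI dJ) : is_MP A (MP A).
Proof.
rewrite /MP; case: excluded_middle_informative => [exMP | noMP].
  exact: xchooseP exMP.
exfalso; apply: noMP; have [X [AXA XAX AXh XAh]] := penrose_mx_exists (tensor_mx A).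
exists (mx_tensor X); apply/and4P; split; apply/eqP; apply: tensor_mx_inj;
  by rewrite ?tensor_mx_ctrans !tensor_mx_einstein ?mx_tensorK.
Qed.

Lemma einMPein dI dJ (A : tensor R dI dJ) : A ** MP A ** A = A.
Proof. by have /and4P[/eqP] := is_MP_MP A. Qed.

Lemma MPeinMP dI dJ (A : tensor R dI dJ) : MP A ** A ** MP A = MP A.
Proof. by have /and4P[_ /eqP] := is_MP_MP A. Qed.

Lemma ctrans_einMP dI dJ (A : tensor R dI dJ) : ctrans (A ** MP A) = A ** MP A.
Proof. by have /and4P[_ _ /eqP] := is_MP_MP A. Qed.

Lemma ctrans_MPein dI dJ (A : tensor R dI dJ) : ctrans (MP A ** A) = MP A ** A.
Proof. by have /and4P[_ _ _ /eqP] := is_MP_MP A. Qed.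

Lemma MP_unique dI dJ (A : tensor R dI dJ) X : is_MP A X -> MP A = X.
Proof.
(* With Y := MP A: X = X (AX)^H (AY)^H = X A Y = (XA)^H (YA)^H Y = Y. *)
case/and4P=> /eqP AXA /eqP XAX /eqP AXh /eqP XAh.
have XAY : X = X ** A ** MP A.
  rewrite -{1}XAX -einsteinA -AXh -{1}(einMPein A) -(einsteinA (A ** MP A)).
  by rewrite ctrans_einstein AXh ctrans_einMP !einsteinA XAX.
have YAX : MP A = X ** A ** MP A.
  rewrite -{1}(MPeinMP A) -{1}(ctrans_MPein A) -{2}AXA -(einsteinA A X).
  rewrite einsteinA ctrans_einstein XAh ctrans_MPein.
  by rewrite -(einsteinA _ (MP A ** A)) MPeinMP.
by rewrite YAX -XAY.
Qed.

Lemma MP_ctrans dI dJ (A : tensor R dI dJ) : MP (ctrans A) = ctrans (MP A).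
Proof.
apply: MP_unique; apply/and4P; split; apply/eqP;
  by rewrite -?ctrans_einstein ?einsteinA ?einMPein ?MPeinMP ?ctransK
    ?ctrans_MPein ?ctrans_einMP.
Qed.

Definition self_adjoint dI (X : tensor R dI dI) := ctrans X = X.

Lemma reverse_order_MP dI dK dJ (E : tensor R dI dK) (T : tensor R dK dJ)
    (A : tensor R dI dJ) :
  E ** T = A -> E ** T ** MP T = E ->
  MP T ** MP E = MP A <-> self_adjoint (MP T ** (MP E ** E) ** T).
Proof.
move=> <- ETT; have ETTZ dL (Z : tensor R dK dL) : E ** (T ** (MP T ** Z)) = E ** Z.
  by rewrite !einsteinA ETT.
split=> [revMP | saTEET].
  by rewrite /self_adjoint !einsteinA revMP -!einsteinA ctrans_MPein.
apply/esym/MP_unique; apply/and4P; split; apply/eqP.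
- by rewrite -!einsteinA ETTZ !einsteinA einMPein.
- by rewrite -!einsteinA ETTZ (einsteinA (MP E)) MPeinMP.
- by rewrite -!einsteinA ETTZ ctrans_einMP.
- by move: saTEET; rewrite /self_adjoint !einsteinA.
Qed.

Lemma MPein_eq dI dJ dK (E : tensor R dI dJ) (K : tensor R dK dJ)
    (P : tensor R dI dK) (Q : tensor R dK dI) :
  E = P ** K -> K = Q ** E -> MP K ** K = MP E ** E.
Proof.
move=> EPK KQE.
have KEE : K ** (MP E ** E) = K.
  by rewrite [in LHS]KQE -einsteinA (einsteinA E) einMPein -KQE.
have EKK : E ** (MP K ** K) = E.
  by rewrite [in LHS]EPK -einsteinA (einsteinA K) einMPein -EPK.
have : MP E ** E = MP K ** K ** (MP E ** E).
  by rewrite -{1}(ctrans_MPein E) -{2}EKK einsteinA ctrans_einstein !ctrans_MPein.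
by rewrite -einsteinA KEE => ->.
Qed.

Lemma MP_absorb_self_adjoint dI dJ (P : tensor R dI dI) (Y : tensor R dI dJ) :
  self_adjoint P -> P ** Y = Y -> MP Y ** P = MP Y.
Proof.
move=> saP PY; have YP : ctrans Y ** P = ctrans Y.
  by rewrite -{2}PY ctrans_einstein saP.
have MPYE : MP Y = MP Y ** ctrans (MP Y) ** ctrans Y.
  by rewrite -einsteinA -ctrans_einstein ctrans_einMP einsteinA MPeinMP.
by rewrite MPYE -einsteinA YP.
Qed.

Lemma MP_reverse_order_equiv dI dJ dH dG (Rt : tensor R dI dH) (T : tensor R dG dJ)
    (A : tensor R dI dJ) :
  A ** MP T ** T = A -> Rt ** MP Rt ** A = A ->
  MP T ** MP (A ** MP T) = MP A <-> MP (MP Rt ** A) ** MP Rt = prodMP Rt T A.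
Proof.
move=> ATT RRA; rewrite /prodMP.
set E := A ** MP T; set K := MP Rt ** A; set F := K ** MP T.
have ET : E ** T = A by rewrite /E ATT.
have FT : F ** T = K by rewrite /F /K -!einsteinA (einsteinA A) ATT.
have EF : MP F ** F = MP E ** E.
  by apply: (@MPein_eq _ _ _ _ _ Rt (MP Rt)); rewrite /F /K /E !einsteinA ?RRA.
rewrite (reverse_order_MP ET) ?ET // -EF -(reverse_order_MP FT) ?FT //.
have RR_sa : self_adjoint (MP Rt ** Rt) := ctrans_MPein Rt.
have RRK : MP Rt ** Rt ** K = K by rewrite /K einsteinA MPeinMP.
have KRR : MP K ** (MP Rt ** Rt) = MP K := MP_absorb_self_adjoint RR_sa RRK.
have FRR : MP F ** (MP Rt ** Rt) = MP F.
  by apply: MP_absorb_self_adjoint; rewrite // /F einsteinA RRK.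
split=> [<- // | TFR]; by rewrite -KRR -FRR !einsteinA TFR.
Qed.

Lemma MP_reverse_order_equiv_dual dI dJ dH dG (Rt : tensor R dI dH)
    (T : tensor R dG dJ) (A : tensor R dI dJ) :
  A ** MP T ** T = A -> Rt ** MP Rt ** A = A ->
  MP T ** MP (A ** MP T) = prodMP Rt T A <-> MP (MP Rt ** A) ** MP Rt = MP A.
Proof.
move=> ATT RRA.
have := @MP_reverse_order_equiv _ _ _ _ (ctrans T) (ctrans Rt) (ctrans A).
rewrite /prodMP !MP_ctrans -!ctrans_einstein !MP_ctrans -!ctrans_einstein.
rewrite !einsteinA ATT RRA => /(_ erefl erefl) [CtoB BtoC].
split=> [eqB | eqC]; apply: (can_inj (@ctransK _ _)).
  by apply: BtoC; rewrite eqB.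
by apply: CtoB; rewrite eqC.
Qed.

End TensorPenrose.

Theorem theorem3p10 (R : realType) (dI dJ dH dG : seq nat)
  (Rt : tensor R dI dH) (S : tensor R dH dG) (T : tensor R dG dJ) :
  let A := einstein (einstein Rt S) T in
  let B := einstein (MP T) (MP (einstein A (MP T))) in
  let C := einstein (MP (einstein (MP Rt) A)) (MP Rt) in
  (B = MP A <-> C = prodMP Rt T A) /\ (B = prodMP Rt T A <-> C = MP A).
Proof.
move=> A B C.
have ATT : einstein (einstein A (MP T)) T = A.
  by rewrite /A -!einsteinA (einsteinA T) einMPein.
have RRA : einstein (einstein Rt (MP Rt)) A = A.
  by rewrite /A !einsteinA einMPein.
split; [exact: MP_reverse_order_equiv | exact: MP_reverse_order_equiv_dual].
Qed.
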